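(* Let $\mathcal{E}_{\mathrm{MUB}}$ be the minimal Clifford measurement ensemble described in the context, $O$ a Hermitian observable not proportional to the identity, and $O_0=O-2^{-n}\operatorname{tr}(O)\mathbb{I}$. For $U\in\mathcal{E}_{\mathrm{MUB}}$ let $\Phi_{U,\mathbf{b}}=U^{\dagger}|\mathbf{b}\rangle\langle\mathbf{b}|U$, $B_U=\max_{\mathbf{b}\in\{0,1\}^n}|\operatorname{tr}(\Phi_{U,\mathbf{b}}O_0)|$ and $p_U=B_U/\sum_{U'\in\mathcal{E}_{\mathrm{MUB}}}B_{U'}$. Consider the biased-MCM estimator: sample $U$ with probability $p_U$, measure $U\rho U^{\dagger}$ in the computational basis obtaining $\mathbf{b}$ with probability $\langle\mathbf{b}|U\rho U^{\dagger}|\mathbf{b}\rangle$, and output $\hat O=\operatorname{tr}(O_0\Phi_{U,\mathbf{b}})/p_U+2^{-n}\operatorname{tr}(O)$. Then for every state $\rho$, $$\mathrm{Var}(\hat O)\le\Big(\sum_{U\in\mathcal{E}_{\mathrm{MUB}}}B_U\Big)^2\le\mathcal{D}(O_0)^2,$$ where $\mathcal{D}(A)=2^{-n}\sum_{P\in\mathbf{P}^n}|\operatorname{tr}(PA)|$ is the stabilizer norm and $\mathbf{P}^n$ is the set of the $4^n$ $n$-fold tensor products of $\mathbb{I}_2,X,Y,Z$.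
   Context: Galois arithmetic: fix an irreducible polynomial $P_n(x)$ of degree $n$ over $\mathrm{GF}(2)$; integers $a=\sum_i a_i2^i\in\{0,\dots,2^n-1\}$ are identified with polynomials $\sum_ia_ix^i$ and row vectors $(a_0,\dots,a_{n-1})$, and $a\odot b=a(x)b(x)\bmod P_n(x)$. Let $\Gamma_{k,j}$ be the coefficient of $x^j$ in $x^k\bmod P_n$, and $M_n^{(0)}$ the $n\times n$ binary matrix with entries $\Gamma_{p+q,0}$. For $v\in\{0,\dots,2^n-1\}$ let $\alpha_{v,i,j}$ be the $j$-th entry of $(v\odot 2^i)M_n^{(0)}$ mod 2 and $g_i^{(v)}=\sqrt{-1}^{\,\alpha_{v,i,i}}X_i\prod_jZ_j^{\alpha_{v,i,j}}$ ($X_i,Z_i$ Paulis on qubit $i$). $\mathcal{E}_{\mathrm{MUB}}=\{\mathbb{I}\}\cup\{U_v\}_{v=0}^{2^n-1}$, where $U_v$ is a Clifford unitary with $U_v^{\dagger}Z_iU_v=\pm g_i^{(v)}$ for all $i$. Unitaries with $p_U=0$ are never sampled. The variance is over the random $U$ and $\mathbf{b}$. *)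

From HB Require Import structures.
From mathcomp Require Import all_boot all_order all_algebra all_field.
Set Implicit Arguments. Unset Strict Implicit. Unset Printing Implicit Defensive.
Import Order.TTheory GRing.Theory Num.Theory.
Local Open Scope ring_scope.

(* A computational basis index a : 'I_(2^n) is identified with the bit string
   (a_0,...,a_{n-1}), a = sum_i a_i 2^i; qubit i carries bit i. *)
Definition bit (i a : nat) : bool := odd (a %/ 2 ^ i).
Definition bito (i a : nat) : 'I_2 := inord (nat_of_bool (bit i a)).

Definition adj (m k : nat) (A : 'M[algC]_(m, k)) : 'M[algC]_(k, m) :=
  (map_mx (fun x : algC => x^*) A)^T.

(* single-qubit operator A acting on qubit i (tensored with identities) *)
Definition op_on (n : nat) (i : 'I_n) (A : 'M[algC]_2) : 'M[algC]_(2 ^ n) :=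
  \matrix_(a, b) (if [forall j : 'I_n, (j != i) ==> (bit j a == bit j b)]
                  then A (bito i a) (bito i b) else 0).

Definition sX : 'M[algC]_2 := \matrix_(p, q) (if p != q then 1 else 0).
Definition sY : 'M[algC]_2 :=
  \matrix_(p, q) (if p == q then 0 else if val p == 0%N then - 'i else 'i).
Definition sZ : 'M[algC]_2 :=
  \matrix_(p, q) (if p == q then (if val p == 0%N then 1 else -1) else 0).

Definition pauli1 (k : 'I_4) : 'M[algC]_2 :=
  match val k with 0 => 1%:M | 1 => sX | 2 => sY | _ => sZ end.

Definition pauli_string (n : nat) (s : {ffun 'I_n -> 'I_4}) : 'M[algC]_(2 ^ n) :=
  \big[mulmx/1%:M]_(i < n) op_on i (pauli1 (s i)).

Definition stab_norm (n : nat) (A : 'M[algC]_(2 ^ n)) : algC :=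
  (2 ^ n)%:R^-1 * \sum_(s : {ffun 'I_n -> 'I_4}) `|\tr (pauli_string s *m A)|.

Definition is_unitary (m : nat) (U : 'M[algC]_m) : Prop := adj U *m U = 1%:M.

Definition clifford (n : nat) (U : 'M[algC]_(2 ^ n)) : Prop :=
  is_unitary U /\ forall s : {ffun 'I_n -> 'I_4},
    exists (c : algC) (s' : {ffun 'I_n -> 'I_4}),
      adj U *m pauli_string s *m U = c *: pauli_string s'.

Definition gf2 := 'F_2.
Definition poly_of_nat (n a : nat) : {poly gf2} := \poly_(i < n) (bit i a)%:R.
Definition gmul (P p q : {poly gf2}) : {poly gf2} := (p * q) %% P.
Definition Gamma (P : {poly gf2}) (k j : nat) : gf2 := ('X ^+ k %% P)`_j.
Definition M0 (P : {poly gf2}) (n : nat) : 'M[gf2]_n :=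
  \matrix_(p, q) Gamma P (p + q) 0.
Definition rowvec (n : nat) (p : {poly gf2}) : 'rV[gf2]_n := \row_(j < n) p`_j.
Definition alpha (P : {poly gf2}) (n v : nat) (i j : 'I_n) : bool :=
  ((rowvec n (gmul P (poly_of_nat n v) 'X^i) *m M0 P n) 0 j == 1).

Definition gop (P : {poly gf2}) (n v : nat) (i : 'I_n) : 'M[algC]_(2 ^ n) :=
  ('i ^+ alpha P v i i) *:
    (op_on i sX *m \big[mulmx/1%:M]_(j < n) (op_on j sZ) ^+ alpha P v i j).

Definition mub_family (P : {poly gf2}) (n : nat) (U : 'I_(2 ^ n) -> 'M[algC]_(2 ^ n)) : Prop :=
  forall (v : 'I_(2 ^ n)) (i : 'I_n),
    clifford (U v) /\
    exists sgn : bool, adj (U v) *m op_on i sZ *m U v = (-1) ^+ sgn *: gop P v i.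

Definition ens (n : nat) (U : 'I_(2 ^ n) -> 'M[algC]_(2 ^ n)) (o : option 'I_(2 ^ n))
  : 'M[algC]_(2 ^ n) := if o is Some v then U v else 1%:M.

Definition traceless (n : nat) (O : 'M[algC]_(2 ^ n)) : 'M[algC]_(2 ^ n) :=
  O - ((2 ^ n)%:R^-1 * \tr O)%:M.

Definition Phi (n : nat) (W : 'M[algC]_(2 ^ n)) (b : 'I_(2 ^ n)) : 'M[algC]_(2 ^ n) :=
  adj W *m delta_mx b b *m W.

Definition Bnd (n : nat) (W O : 'M[algC]_(2 ^ n)) : algC :=
  \big[Num.max/0]_(b : 'I_(2 ^ n)) `|\tr (Phi W b *m traceless O)|.

Definition Btot n U (O : 'M[algC]_(2 ^ n)) : algC :=
  \sum_(o : option 'I_(2 ^ n)) Bnd (ens U o) O.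

Definition pU n U (O : 'M[algC]_(2 ^ n)) (o : option 'I_(2 ^ n)) : algC :=
  Bnd (ens U o) O / Btot U O.

Definition outcome_prob n (W rho : 'M[algC]_(2 ^ n)) (b : 'I_(2 ^ n)) : algC :=
  (W *m rho *m adj W) b b.

Definition Ohat n U (O : 'M[algC]_(2 ^ n)) (o : option 'I_(2 ^ n)) (b : 'I_(2 ^ n)) : algC :=
  \tr (traceless O *m Phi (ens U o) b) / pU U O o + (2 ^ n)%:R^-1 * \tr O.

(* expectation of a function of (U, b) under the sampling scheme
   (unitaries with p_U = 0 are never sampled) *)
Definition expect n U (O rho : 'M[algC]_(2 ^ n))
  (f : option 'I_(2 ^ n) -> 'I_(2 ^ n) -> algC) : algC :=
  \sum_(o | pU U O o != 0) \sum_(b : 'I_(2 ^ n))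
     pU U O o * outcome_prob (ens U o) rho b * f o b.

Definition variance n U (O rho : 'M[algC]_(2 ^ n)) : algC :=
  let m := expect U O rho (Ohat U O) in
  expect U O rho (fun o b => (Ohat U O o b - m) ^+ 2).

Definition is_hermitian m (A : 'M[algC]_m) : Prop := adj A = A.
Definition is_density m (rho : 'M[algC]_m) : Prop :=
  [/\ is_hermitian rho, forall v : 'cV[algC]_m, 0 <= (adj v *m rho *m v) 0 0
    & \tr rho = 1].

(* Index the Pauli operators by Weyl operators W(x, w) = X^x Z^w with x, w in
   GF(2)^n, so that D(A) = 2^-n sum_(x, w) |tr (W(x, w) A)|.  The projector
   |b><b| is the average of the signed diagonal operators W(0, z); as O_0 is
   traceless the term z = 0 drops, whence B_U <= 2^-n sum_(z != 0)
   |tr (U^dag W(0, z) U O_0)|.  Conjugation by U_v sends W(0, z) to a phase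
   times W(z, z A_v), where A_v = (alpha_(v,i,j)), and irreducibility of P makes
   v |-> z A_v injective for z != 0: the identity and the U_v together meet
   every Weyl operator at most once, so sum_U B_U <= D(O_0).  For the variance,
   the mean minimises the mean squared deviation, and |tr (O_0 Phi_(U,b))| <= B_U:
   Var <= E (Ohat - 2^-n tr O)^2 <= sum_U p_U (B_U / p_U)^2 = (sum_U B_U)^2. *)

From HB Require Import structures.
From mathcomp Require Import all_boot all_order all_algebra all_field.
From mathcomp Require Import ring.
Set Implicit Arguments. Unset Strict Implicit. Unset Printing Implicit Defensive.
Import Order.TTheory GRing.Theory Num.Theory.
Local Open Scope ring_scope.

Section Bits.
Local Open Scope nat_scope.

Lemma bit0 a : bit 0 a = odd a.
Proof. by rewrite /bit expn0 divn1. Qed.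

Lemma bitS j a : bit j.+1 a = bit j a./2.
Proof. by rewrite /bit expnS divnMA -divn2. Qed.

Lemma eq_from_bits n a b : a < 2 ^ n -> b < 2 ^ n ->
  (forall j, j < n -> bit j a = bit j b) -> a = b.
Proof.
elim: n a b => [|n IHn] a b; first by rewrite !ltnS !leqn0 => /eqP-> /eqP->.
rewrite expnS mul2n => lt_a lt_b eq_ab.
rewrite -[a]odd_double_half -[b]odd_double_half; have := eq_ab 0 isT; rewrite !bit0 => ->.
congr (_ + _.*2); apply: IHn => [||j lt_jn]; rewrite ?ltn_half_double //.
by rewrite -!bitS eq_ab.
Qed.

Definition nat_of_bits (f : nat -> bool) n := \sum_(j < n) f j * 2 ^ j.

Lemma nat_of_bitsS f n :
  nat_of_bits f n.+1 = f 0 + (nat_of_bits (fun j => f j.+1) n).*2.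
Proof.
rewrite /nat_of_bits big_ord_recl /= expn0 muln1 -muln2 big_distrl /=; congr (_ + _).
by apply: eq_bigr => i _; rewrite expnS -mulnA [2 ^ i * 2]mulnC.
Qed.

Lemma nat_of_bits_lt f n : nat_of_bits f n < 2 ^ n.
Proof.
elim: n f => [|n IHn] f; first by rewrite /nat_of_bits big_ord0.
rewrite nat_of_bitsS expnS mul2n; have := IHn (fun j => f j.+1).
by case: (f 0) => /= lt_n; rewrite ?add0n ?ltn_double // -doubleS leq_double.
Qed.

Lemma bit_nat_of_bits f n j : j < n -> bit j (nat_of_bits f n) = f j.
Proof.
elim: n f j => [|n IHn] f [|j] //= lt_jn; rewrite nat_of_bitsS.
  by rewrite bit0 oddD odd_double addbF; case: (f 0).
by rewrite bitS half_bit_double IHn.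
Qed.

End Bits.

Lemma gf2_cases (x : gf2) : x = 0 \/ x = 1.
Proof. by case: x => [[|[|k]] lt_k]; [left|right|]; try exact: val_inj. Qed.

Lemma gf2_natr_eq1 (x : gf2) : (x == 1)%:R = x.
Proof. by case: (gf2_cases x) => ->. Qed.

Lemma gf2_pchar : (2 \in [pchar gf2])%N.
Proof. exact: pchar_Fp. Qed.

Lemma gf2_natr_bool_inj (b c : bool) : (b%:R : gf2) = c%:R -> b = c.
Proof. by case: b; case: c => // /eqP. Qed.

Lemma gf2_addb (b c : bool) : (b%:R + c%:R : gf2) = (b (+) c)%:R.
Proof. by case: b; case: c; rewrite ?addr0 ?add0r // (addrr_pchar2 gf2_pchar). Qed.

Lemma gf2_mulb (b c : bool) : (b%:R * c%:R : gf2) = (b && c)%:R.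
Proof. by case: b; case: c; rewrite ?mulr0 ?mul0r ?mulr1. Qed.

Lemma oppv_gf2 n (v : 'rV[gf2]_n) : - v = v.
Proof. by apply/rowP => j; rewrite mxE (oppr_pchar2 gf2_pchar). Qed.

Lemma addv_gf2_eq0 n (u v : 'rV[gf2]_n) : (u + v == 0) = (u == v).
Proof. by rewrite addr_eq0 oppv_gf2. Qed.

Lemma card_rV_gf2 n : #|{: 'rV[gf2]_n}| = (2 ^ n)%N.
Proof. by rewrite card_mx card_Fp // mul1n. Qed.

Definition bits_rV n (a : nat) : 'rV[gf2]_n := \row_j (bit j a)%:R.

Definition ord_of_rV n (r : 'rV[gf2]_n) : 'I_(2 ^ n) :=
  Ordinal (nat_of_bits_lt (fun j => if insub j is Some k then r 0 k == 1 else false) n).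

Lemma ord_of_rVK n (r : 'rV[gf2]_n) : bits_rV n (ord_of_rV r) = r.
Proof. by apply/rowP => j; rewrite mxE bit_nat_of_bits // valK gf2_natr_eq1. Qed.

Lemma bits_rV_inj n : injective (fun a : 'I_(2 ^ n) => bits_rV n a).
Proof.
move=> a b eq_ab; apply/val_inj/(eq_from_bits (ltn_ord a) (ltn_ord b)) => j lt_jn.
by have := congr1 (fun r : 'rV_n => r 0 (Ordinal lt_jn)) eq_ab; rewrite !mxE => /gf2_natr_bool_inj.
Qed.

Lemma eq_bits_rV n (a b : 'I_(2 ^ n)) : (bits_rV n a == bits_rV n b) = (a == b).
Proof. exact: (inj_eq (@bits_rV_inj n)). Qed.

Definition sign2 (x : gf2) : algC := if x == 0 then 1 else -1.

Lemma sign20 : sign2 0 = 1. Proof. by []. Qed.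
Lemma sign21 : sign2 1 = -1. Proof. by []. Qed.

Lemma sign2D x y : sign2 (x + y) = sign2 x * sign2 y.
Proof.
by case: (gf2_cases x) => ->; case: (gf2_cases y) => ->;
  rewrite ?addr0 ?add0r ?(addrr_pchar2 gf2_pchar) ?sign20 ?sign21 ?mulr1 ?mul1r ?mulrNN ?mulr1.
Qed.

Lemma norm_sign2 x : `|sign2 x| = 1.
Proof. by rewrite /sign2; case: ifP; rewrite ?normrN normr1. Qed.

Definition dotv n (u v : 'rV[gf2]_n) : gf2 := (u *m v^T) 0 0.

Lemma dotvDl n (u u' v : 'rV[gf2]_n) : dotv (u + u') v = dotv u v + dotv u' v.
Proof. by rewrite /dotv mulmxDl mxE. Qed.

Lemma dotvDr n (u v v' : 'rV[gf2]_n) : dotv u (v + v') = dotv u v + dotv u v'.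
Proof. by rewrite /dotv linearD mulmxDr mxE. Qed.

Lemma dotv0l n (v : 'rV[gf2]_n) : dotv 0 v = 0.
Proof. by rewrite /dotv mul0mx mxE. Qed.

Lemma dotv0r n (v : 'rV[gf2]_n) : dotv v 0 = 0.
Proof. by rewrite /dotv trmx0 mulmx0 mxE. Qed.

Lemma dotv_deltal n (i : 'I_n) (v : 'rV[gf2]_n) : dotv 'e_i v = v 0 i.
Proof. by rewrite /dotv -rowE !mxE. Qed.

Lemma dotv_deltaZl n (i : 'I_n) (k : gf2) (v : 'rV[gf2]_n) :
  dotv (k *: 'e_i) v = k * v 0 i.
Proof. by rewrite /dotv -scalemxAl mxE -dotv_deltal. Qed.

(* [weyl x w] is X^x Z^w: the sign (-1)^(w.b) is taken at the input index b. *)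
Definition weyl n (x w : 'rV[gf2]_n) : 'M[algC]_(2 ^ n) :=
  \matrix_(a, b) (if bits_rV n a == bits_rV n b + x
                  then sign2 (dotv w (bits_rV n b)) else 0).

Lemma weylM n (x w x' w' : 'rV[gf2]_n) :
  weyl x w *m weyl x' w' = sign2 (dotv w x') *: weyl (x + x') (w + w').
Proof.
apply/matrixP => a c; rewrite !mxE (bigD1 (ord_of_rV (bits_rV n c + x'))) //=.
rewrite big1 => [|b /negbTE nbc]; last first.
  rewrite !mxE; case: (bits_rV n b =P bits_rV n c + x') => [eq_b|_]; last by rewrite mulr0.
  by move: nbc; rewrite -eq_bits_rV ord_of_rVK eq_b eqxx.
rewrite !mxE !ord_of_rVK eqxx addr0 addrA [_ + x + x']addrAC.
case: ifP => _; rewrite ?mul0r ?mulr0 //.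
by rewrite dotvDr dotvDl !sign2D mulrA [sign2 _ * sign2 (dotv w x')]mulrC -!mulrA.
Qed.

Lemma weyl0 n : weyl 0 0 = 1%:M :> 'M[algC]_(2 ^ n).
Proof.
by apply/matrixP => a b; rewrite !mxE addr0 eq_bits_rV dotv0l sign20; case: (a == b).
Qed.

Lemma sum_sign2_dotv n (y : 'rV[gf2]_n) :
  \sum_(z : 'rV[gf2]_n) sign2 (dotv z y) = if y == 0 then (2 ^ n)%:R else 0.
Proof.
have [->|y_neq0] := eqVneq y 0.
  by under eq_bigr do rewrite dotv0r sign20; rewrite sumr_const card_rV_gf2.
have /existsP[j /eqP yj1] : [exists j, y 0 j == 1].
  apply: contraNT y_neq0; rewrite negb_exists => /forallP yj.
  apply/eqP/rowP => j; rewrite mxE.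
  by have := yj j; case: (gf2_cases (y 0 j)) => ->.
(* Translating z by e_j flips every sign. *)
set S := \sum_z _; have S_opp : S = - S.
  rewrite {1}/S (reindex_inj (addIr 'e_j)) /= -sumrN.
  by apply: eq_bigr => z _; rewrite dotvDl dotv_deltal yj1 sign2D sign21 mulrN1.
by apply/eqP; rewrite -[_ == 0](mulrn_eq0 _ 2) mulr2n {2}S_opp subrr.
Qed.

Lemma delta_mx_weyl n (b : 'I_(2 ^ n)) :
  delta_mx b b = (2 ^ n)%:R^-1 *: \sum_(z : 'rV[gf2]_n) sign2 (dotv z (bits_rV n b)) *: weyl 0 z.
Proof.
apply/matrixP => a c; rewrite !mxE summxE.
under eq_bigr do rewrite !mxE addr0 eq_bits_rV.
have [<-|neq_ac] := eqVneq a c; last first.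
  rewrite big1 ?mulr0 => [|z _]; last by rewrite mulr0.
  by case: eqP => // eq_ab; rewrite -eq_ab eq_sym (negbTE neq_ac).
under eq_bigr do rewrite -sign2D -dotvDr.
rewrite sum_sign2_dotv addv_gf2_eq0 eq_bits_rV eq_sym andbb.
by case: (b == a); rewrite ?mulr0 // mulVf // pnatr_eq0 expn_eq0.
Qed.

Lemma val_inord_bool (p : bool) : val (inord p : 'I_2) = p.
Proof. by case: p; apply: inordK. Qed.

Lemma eq_inord_bool (p q : bool) : ((inord p : 'I_2) == inord q) = (p == q).
Proof. by rewrite -val_eqE /= !val_inord_bool; case: p; case: q. Qed.

Lemma eq_bits_rV_add_delta n (i : 'I_n) (a b : nat) (x : bool) :
  (bits_rV n a == bits_rV n b + x%:R *: 'e_i) =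
  [forall j, (j != i) ==> (bit j a == bit j b)] && (bit i a == bit i b (+) x).
Proof.
apply/eqP/andP => [eq_ab|[/forallP eq_ab /eqP eq_i]]; last first.
  apply/rowP => j; rewrite !mxE; have [<-|neq_ij] := eqVneq i j.
    by rewrite eqxx mulr1 gf2_addb eq_i.
  by rewrite mulr0 addr0; have := eq_ab j; rewrite eq_sym neq_ij => /eqP->.
have bit_ab (j : 'I_n) : (bit j a)%:R = (bit j b)%:R + x%:R * (j == i)%:R :> gf2.
  by have := congr1 (fun r : 'rV_n => r 0 j) eq_ab; rewrite !mxE.
split; first apply/forallP => j; first apply/implyP => neq_ji.
  by have := bit_ab j; rewrite (negbTE neq_ji) mulr0 addr0 => /gf2_natr_bool_inj->.
by have := bit_ab i; rewrite eqxx mulr1 gf2_addb => /gf2_natr_bool_inj->.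
Qed.

Lemma op_on_weyl n (i : 'I_n) (A : 'M[algC]_2) (c : algC) (x w : bool) :
  (forall p q : bool, A (inord p) (inord q) =
     c * (if p == q (+) x then (if w && q then -1 else 1) else 0)) ->
  op_on i A = c *: weyl (x%:R *: 'e_i) (w%:R *: 'e_i).
Proof.
move=> A_entries; apply/matrixP => a b.
rewrite !mxE eq_bits_rV_add_delta dotv_deltaZl mxE gf2_mulb.
case: ifP => _ /=; last by rewrite mulr0.
by rewrite /bito A_entries; case: (w && _).
Qed.

Definition phased n (x w : 'rV[gf2]_n) (M : 'M[algC]_(2 ^ n)) :=
  exists2 c : algC, `|c| = 1 & M = c *: weyl x w.

Lemma phased1 n : phased (0 : 'rV[gf2]_n) 0 1%:M.
Proof. by exists 1; rewrite ?normr1 // scale1r weyl0. Qed.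

Lemma phasedM n (x w x' w' : 'rV[gf2]_n) M M' :
  phased x w M -> phased x' w' M' -> phased (x + x') (w + w') (M *m M').
Proof.
move=> [c c1 ->] [c' c'1 ->]; exists (c * c' * sign2 (dotv w x')).
  by rewrite !normrM c1 c'1 norm_sign2 !mulr1.
by rewrite -scalemxAl -scalemxAr weylM !scalerA.
Qed.

Lemma phasedZ n (x w : 'rV[gf2]_n) M d : `|d| = 1 -> phased x w M -> phased x w (d *: M).
Proof. by move=> d1 [c c1 ->]; exists (d * c); rewrite ?normrM ?d1 ?c1 ?mulr1 ?scalerA. Qed.

Lemma phased_expb n (b : bool) (x w : 'rV[gf2]_n) M :
  phased x w M -> phased (b%:R *: x) (b%:R *: w) (M ^+ b).
Proof. by case: b; rewrite ?expr1 ?scale1r ?expr0 ?scale0r // => _; apply: phased1. Qed.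

Lemma phased_prod n (I : finType) (X Y : I -> 'rV[gf2]_n) (F : I -> 'M[algC]_(2 ^ n)) :
  (forall i, phased (X i) (Y i) (F i)) ->
  phased (\sum_i X i) (\sum_i Y i) (\big[mulmx/1%:M]_i F i).
Proof.
move=> phF; apply: (big_rec3 (fun x w M => phased x w M)); first exact: phased1.
by move=> i x w M _; apply: phasedM.
Qed.

Lemma norm_tr_phased n (x w : 'rV[gf2]_n) M (A : 'M[algC]_(2 ^ n)) :
  phased x w M -> `|\tr (M *m A)| = `|\tr (weyl x w *m A)|.
Proof. by move=> [c c1 ->]; rewrite -scalemxAl mxtraceZ normrM c1 mul1r. Qed.

Definition pauli_x (k : 'I_4) : bool := (val k == 1)%N || (val k == 2)%N.
Definition pauli_z (k : 'I_4) : bool := (val k == 2)%N || (val k == 3)%N.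

Lemma pauli1_entries (k : 'I_4) : exists2 c : algC, `|c| = 1 & forall p q : bool,
  pauli1 k (inord p) (inord q) =
    c * (if p == q (+) pauli_x k then (if pauli_z k && q then -1 else 1) else 0).
Proof.
case: k => [[|[|[|[|k]]]] lt_k4] //; rewrite /pauli1 /pauli_x /pauli_z /=.
- by exists 1 => [|p q]; rewrite ?normr1 // !mxE eq_inord_bool mul1r addbF; case: (p == q).
- by exists 1 => [|p q]; rewrite ?normr1 // !mxE eq_inord_bool mul1r; case: p; case: q.
- exists 'i => [|p q]; first exact: normCi.
  by rewrite !mxE eq_inord_bool val_inord_bool; case: p; case: q; rewrite /= ?mulr0 ?mulr1 ?mulrN1.
- exists 1 => [|p q]; rewrite ?normr1 // !mxE eq_inord_bool val_inord_bool mul1r addbF.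
  by case: p; case: q.
Qed.

Lemma phased_op_on_pauli1 n (i : 'I_n) (k : 'I_4) :
  phased ((pauli_x k)%:R *: 'e_i) ((pauli_z k)%:R *: 'e_i) (op_on i (pauli1 k)).
Proof. by have [c c1 /op_on_weyl->] := pauli1_entries k; exists c. Qed.

Lemma phased_op_on_sX n (i : 'I_n) : phased 'e_i 0 (op_on i sX).
Proof. by have := phased_op_on_pauli1 i (Ordinal (isT : 1 < 4)%N); rewrite scale1r scale0r. Qed.

Lemma phased_op_on_sZ n (i : 'I_n) : phased 0 'e_i (op_on i sZ).
Proof. by have := phased_op_on_pauli1 i (Ordinal (isT : 3 < 4)%N); rewrite scale1r scale0r. Qed.

Definition pauli_xs n (s : {ffun 'I_n -> 'I_4}) : 'rV[gf2]_n := \row_i (pauli_x (s i))%:R.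
Definition pauli_zs n (s : {ffun 'I_n -> 'I_4}) : 'rV[gf2]_n := \row_i (pauli_z (s i))%:R.

Lemma phased_pauli_string n (s : {ffun 'I_n -> 'I_4}) :
  phased (pauli_xs s) (pauli_zs s) (pauli_string s).
Proof.
rewrite [pauli_xs s]row_sum_delta [pauli_zs s]row_sum_delta.
under eq_bigr do rewrite mxE.
under [X in phased _ X _]eq_bigr do rewrite mxE.
exact: phased_prod (fun i => phased_op_on_pauli1 i (s i)).
Qed.

Definition pauli_of_bits (x z : gf2) : 'I_4 :=
  inord (if x == 1 then (if z == 1 then 2 else 1) else (if z == 1 then 3 else 0)).

Lemma sum_pauli_string n (F : 'rV[gf2]_n -> 'rV[gf2]_n -> algC) :
  \sum_(s : {ffun 'I_n -> 'I_4}) F (pauli_xs s) (pauli_zs s) =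
  \sum_(x : 'rV[gf2]_n) \sum_(z : 'rV[gf2]_n) F x z.
Proof.
rewrite pair_big (reindex (fun s => (pauli_xs s, pauli_zs s))) //=.
exists (fun p : 'rV_n * 'rV_n => [ffun i => pauli_of_bits (p.1 0 i) (p.2 0 i)]) => [s _|[x z] _].
  apply/ffunP => i; rewrite ffunE !mxE; apply: val_inj.
  by case: (s i) => [[|[|[|[|k]]]] lt_k4] //; rewrite /pauli_of_bits /= inordK.
congr (_, _); apply/rowP => i; rewrite !mxE ffunE /=;
  by case: (gf2_cases (x 0 i)) => ->; case: (gf2_cases (z 0 i)) => ->;
     rewrite /pauli_of_bits /pauli_x /pauli_z /= inordK.
Qed.

Definition alpha_mx (P : {poly gf2}) n (v : nat) : 'M[gf2]_n :=
  \matrix_(i, j) (alpha P v i j)%:R.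

Lemma phased_prod_sZ n (u : 'rV[gf2]_n) (b : 'I_n -> bool) :
  (forall i, u 0 i = (b i)%:R) ->
  phased 0 u (\big[mulmx/1%:M]_i op_on i sZ ^+ b i).
Proof.
move=> uE; have -> : u = \sum_i (b i)%:R *: 'e_i.
  by rewrite [LHS]row_sum_delta; apply: eq_bigr => i _; rewrite uE.
have := phased_prod (fun i => phased_expb (b i) (phased_op_on_sZ i)).
by rewrite big1 // => i _; rewrite scaler0.
Qed.

Lemma phased_gop (P : {poly gf2}) n v (i : 'I_n) :
  phased 'e_i (row i (alpha_mx P n v)) (gop P v i).
Proof.
apply: phasedZ; first by rewrite normrX normCi expr1n.
rewrite -[X in phased X]addr0 -[X in phased _ X]add0r; apply: phasedM (phased_op_on_sX i) _.
by apply: phased_prod_sZ => j; rewrite !mxE.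
Qed.

Lemma adj1mx m : adj (1%:M : 'M[algC]_m) = 1%:M.
Proof. by apply/matrixP => i j; rewrite !mxE eq_sym; case: (i == j); rewrite ?conjC1 ?conjC0. Qed.

Lemma adjM m k l (A : 'M[algC]_(m, k)) (B : 'M[algC]_(k, l)) : adj (A *m B) = adj B *m adj A.
Proof. by rewrite /adj map_mxM trmx_mul. Qed.

Lemma adjK m k (A : 'M[algC]_(m, k)) : adj (adj A) = A.
Proof. by apply/matrixP => i j; rewrite !mxE conjCK. Qed.

Lemma adj_delta m k (i : 'I_m) (j : 'I_k) : adj (delta_mx i j : 'M[algC]_(m, k)) = delta_mx j i.
Proof.
by apply/matrixP => a b; rewrite !mxE; case: (b == i); case: (a == j); rewrite ?conjC1 ?conjC0.
Qed.

Lemma unitary_ens n (U : 'I_(2 ^ n) -> 'M[algC]_(2 ^ n)) :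
  (forall v, adj (U v) *m U v = 1%:M) -> forall o, adj (ens U o) *m ens U o = 1%:M.
Proof. by move=> unit_U [v|] //=; rewrite adj1mx mulmx1. Qed.

Lemma conj_unitary_prod m (V : 'M[algC]_m) (I : Type) (r : seq I) (F : I -> 'M[algC]_m) :
  adj V *m V = 1%:M ->
  adj V *m (\big[mulmx/1%:M]_(i <- r) F i) *m V = \big[mulmx/1%:M]_(i <- r) (adj V *m F i *m V).
Proof.
move=> unit_V; apply: (big_morph (fun M => adj V *m M *m V)) => [A B|].
  by rewrite -!mulmxA [V *m (adj V *m _)]mulmxA (mulmx1C unit_V) mul1mx !mulmxA.
by rewrite mulmx1.
Qed.

Lemma phased_conj_weylZ (P : {poly gf2}) n (U : 'I_(2 ^ n) -> 'M[algC]_(2 ^ n))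
    (v : 'I_(2 ^ n)) (z : 'rV[gf2]_n) :
  mub_family P U -> adj (U v) *m U v = 1%:M ->
  phased z (z *m alpha_mx P n v) (adj (U v) *m weyl 0 z *m U v).
Proof.
move=> HU unit_Uv; set b := fun i => z 0 i == 1.
have [c c1 weylZ] := phased_prod_sZ (b := b) (fun i => esym (gf2_natr_eq1 (z 0 i))).
have c_neq0 : c != 0 by rewrite -normr_eq0 c1 oner_neq0.
have -> : weyl 0 z = c^-1 *: \big[mulmx/1%:M]_i op_on i sZ ^+ b i.
  by rewrite weylZ scalerA mulVf // scale1r.
rewrite -scalemxAr -scalemxAl conj_unitary_prod //.
apply: phasedZ; first by rewrite normfV c1 invr1.
have conj_expb i : adj (U v) *m op_on i sZ ^+ b i *m U v = (adj (U v) *m op_on i sZ *m U v) ^+ b i.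
  by case: (b i); rewrite ?expr1 ?expr0 ?mulmx1.
under eq_bigr do rewrite conj_expb.
have zE i : z 0 i = (b i)%:R by rewrite gf2_natr_eq1.
rewrite mulmx_sum_row [X in phased X]row_sum_delta.
under [X in phased X]eq_bigr do rewrite zE.
under [X in phased _ X]eq_bigr do rewrite zE.
apply: phased_prod => i; apply: phased_expb; have [_ [sgn ->]] := HU v i.
by apply: phasedZ; [rewrite normrX normrN normr1 expr1n | apply: phased_gop].
Qed.

Section Coef0Modp.
Variables (F : fieldType) (P : {poly F}).

Definition coef0_modp (q : {poly F}) : F := (q %% P)`_0.

Lemma coef0_modpD p q : coef0_modp (p + q) = coef0_modp p + coef0_modp q.
Proof. by rewrite /coef0_modp modpD coefD. Qed.

Lemma coef0_modpB p q : coef0_modp (p - q) = coef0_modp p - coef0_modp q.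
Proof. by rewrite /coef0_modp modpD modNp coefB. Qed.

Lemma coef0_modpZ c q : coef0_modp (c *: q) = c * coef0_modp q.
Proof. by rewrite /coef0_modp modpZl coefZ. Qed.

Lemma coef0_modp_sum (I : Type) (r : seq I) (G : I -> {poly F}) :
  coef0_modp (\sum_(i <- r) G i) = \sum_(i <- r) coef0_modp (G i).
Proof. by apply: (big_morph _ coef0_modpD); rewrite /coef0_modp mod0p coef0. Qed.

Lemma coef0_modp_modl p q : coef0_modp ((p %% P) * q) = coef0_modp (p * q).
Proof. by rewrite /coef0_modp mulrC modp_mul mulrC. Qed.

Lemma poly_sum_small n (q : {poly F}) : (size q <= n)%N -> q = \sum_(i < n) q`_i *: 'X^i.
Proof.
move=> le_qn; rewrite -poly_def; apply/polyP => k; rewrite coef_poly.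
by case: ltnP => // le_nk; rewrite nth_default // (leq_trans le_qn).
Qed.

Lemma coprimep_irreducible_small (q : {poly F}) :
  irreducible_poly P -> q != 0 -> (size q < size P)%N -> coprimep P q.
Proof.
move=> irrP q_neq0 lt_qP; rewrite irreducible_poly_coprime //.
by apply/negP => /(dvdp_leq q_neq0); rewrite leqNgt lt_qP.
Qed.

Lemma coef0_modp_mulX_eq0 n (r : {poly F}) :
  irreducible_poly P -> size P = n.+1 ->
  (forall j : 'I_n, coef0_modp (r * 'X^j) = 0) -> P %| r.
Proof.
move=> irrP sizeP r_perp; have P_neq0 : P != 0 by rewrite -size_poly_eq0 sizeP.
apply: contraT => nPr; have lt_rP : (size (r %% P)%R < size P)%N by rewrite ltn_modp.
have [[u1 u2] /= u12] := Bezout_eq1_coprimepP _ _ (coprimep_irreducible_small irrP nPr lt_rP).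
have : coef0_modp ((r %% P) * (u2 %% P)) = 1.
  rewrite /coef0_modp modp_mul mulrC -[u2 * _](addKr (u1 * P)) u12.
  by rewrite modpD modNp modp_mull oppr0 add0r modp_small ?coef1 // size_poly1; case: irrP.
have le_u2n : (size (u2 %% P)%R <= n)%N by rewrite -ltnS -sizeP ltn_modp.
rewrite (poly_sum_small le_u2n) mulr_sumr coef0_modp_sum big1 => [/eqP|j _].
  by rewrite eq_sym oner_eq0.
by rewrite -scalerAr coef0_modpZ coef0_modp_modl r_perp mulr0.
Qed.

End Coef0Modp.

Section AlphaMatrix.
Variables (P : {poly gf2}) (n : nat).
Hypotheses (irrP : irreducible_poly P) (sizeP : size P = n.+1).

Lemma rowvec_mulmx_M0 (q : {poly gf2}) (j : 'I_n) : (size q <= n)%N ->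
  (rowvec n q *m M0 P n) 0 j = coef0_modp P (q * 'X^j).
Proof.
move=> le_qn; rewrite {2}(poly_sum_small le_qn) mulr_suml coef0_modp_sum mxE.
by apply: eq_bigr => i _; rewrite !mxE -scalerAl coef0_modpZ -exprD.
Qed.

Lemma alpha_mxE (v : nat) (i j : 'I_n) :
  alpha_mx P n v i j = coef0_modp P (poly_of_nat n v * 'X^i * 'X^j).
Proof.
rewrite mxE /alpha gf2_natr_eq1 rowvec_mulmx_M0 /gmul ?coef0_modp_modl //.
by rewrite -ltnS -sizeP ltn_modp -size_poly_eq0 sizeP.
Qed.

Lemma mulmx_alpha_mxE (v : nat) (z : 'rV[gf2]_n) (j : 'I_n) :
  (z *m alpha_mx P n v) 0 j = coef0_modp P (poly_of_nat n v * rVpoly z * 'X^j).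
Proof.
rewrite mxE [z in rVpoly z]row_sum_delta linear_sum mulr_sumr mulr_suml coef0_modp_sum.
by apply: eq_bigr => i _; rewrite alpha_mxE linearZ /= rVpoly_delta -scalerAr -scalerAl coef0_modpZ.
Qed.

Lemma poly_of_nat_inj (a b : 'I_(2 ^ n)) : poly_of_nat n a = poly_of_nat n b -> a = b.
Proof.
move=> eq_ab; apply/val_inj/(eq_from_bits (ltn_ord a) (ltn_ord b)) => j lt_jn.
have := congr1 (fun p : {poly gf2} => p`_j) eq_ab.
by rewrite !coef_poly lt_jn => /gf2_natr_bool_inj.
Qed.

(* This is where irreducibility of P makes the bases mutually unbiased. *)
Lemma mulmx_alpha_mx_inj (z : 'rV[gf2]_n) : z != 0 ->
  injective (fun v : 'I_(2 ^ n) => z *m alpha_mx P n v).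
Proof.
move=> z_neq0 v v' eq_zA; apply: poly_of_nat_inj; apply/eqP; rewrite -subr_eq0.
set d := _ - _; have : P %| d * rVpoly z.
  apply: coef0_modp_mulX_eq0 irrP sizeP _ => j.
  have := congr1 (fun r : 'rV_n => r 0 j) eq_zA; rewrite /= !mulmx_alpha_mxE.
  by rewrite mulrBl mulrBl coef0_modpB => ->; rewrite subrr.
have size_lt (q : {poly gf2}) : (size q <= n)%N -> (size q < size P)%N by rewrite sizeP ltnS.
have zpoly_neq0 : rVpoly z != 0.
  by apply: contra_neq z_neq0 => z0; rewrite -[z]rVpolyK z0 linear0.
rewrite Gauss_dvdpl ?coprimep_irreducible_small ?size_lt ?size_poly //.
have le_dn : (size d <= n)%N.
  by rewrite (leq_trans (size_polyD _ _)) // size_polyN geq_max !size_poly.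
by apply: contraTT => d_neq0; apply/negP => /(dvdp_leq d_neq0); rewrite leqNgt size_lt.
Qed.
End AlphaMatrix.


Lemma tr_traceless n (O : 'M[algC]_(2 ^ n)) : \tr (traceless O) = 0.
Proof.
rewrite /traceless linearB /= mxtrace_scalar -[_ *+ 2 ^ n]mulr_natl mulrA mulfV ?mul1r ?subrr //.
by rewrite pnatr_eq0 expn_eq0.
Qed.

Lemma norm_tr_Phi_le_sum_weylZ n (W : 'M[algC]_(2 ^ n)) (T : 'M[algC]_(2 ^ n)) (b : 'I_(2 ^ n)) :
  adj W *m W = 1%:M -> \tr T = 0 ->
  `|\tr (Phi W b *m T)| <=
    (2 ^ n)%:R^-1 * \sum_(z : 'rV[gf2]_n | z != 0) `|\tr (adj W *m weyl 0 z *m W *m T)|.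
Proof.
move=> unit_W trT0.
rewrite /Phi delta_mx_weyl -scalemxAr -!scalemxAl mxtraceZ.
rewrite mulmx_sumr !mulmx_suml raddf_sum (bigD1 0) //= weyl0.
rewrite -scalemxAr -!scalemxAl mxtraceZ mulmx1 unit_W mul1mx trT0 mulr0 add0r.
rewrite normrM ger0_norm ?invr_ge0 ?ler0n // ler_wpM2l ?invr_ge0 ?ler0n //.
apply: le_trans (ler_norm_sum _ _ _) _; apply: ler_sum => z _.
by rewrite -scalemxAr -!scalemxAl mxtraceZ normrM norm_sign2 mul1r.
Qed.

Section BigmaxNonneg.
Variables (R : numDomainType) (I : eqType) (F : I -> R).
Hypothesis F_ge0 : forall i, 0 <= F i.

Lemma bigmax_ge0 (r : seq I) : 0 <= \big[Num.max/0]_(i <- r) F i.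
Proof.
elim/big_ind: _ => // x y x_ge0 y_ge0.
by rewrite comparable_le_max ?x_ge0 // real_comparable // ger0_real.
Qed.

Lemma le_bigmax_ge0 (r : seq I) i : i \in r -> F i <= \big[Num.max/0]_(j <- r) F j.
Proof.
elim: r => // j r IHr; rewrite inE big_cons.
rewrite comparable_le_max ?real_comparable ?ger0_real ?bigmax_ge0 //.
by case/predU1P=> [->|/IHr->]; rewrite ?lexx ?orbT.
Qed.

End BigmaxNonneg.

Lemma Bnd_ge0 n (W O : 'M[algC]_(2 ^ n)) : 0 <= Bnd W O.
Proof. exact: bigmax_ge0. Qed.

Lemma norm_tr_Phi_le_Bnd n (W O : 'M[algC]_(2 ^ n)) b :
  `|\tr (Phi W b *m traceless O)| <= Bnd W O.
Proof. by apply: (le_bigmax_ge0 (fun b => normr_ge0 _)); rewrite mem_index_enum. Qed.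

Lemma Bnd_le_sum_weylZ n (W O : 'M[algC]_(2 ^ n)) : adj W *m W = 1%:M ->
  Bnd W O <= (2 ^ n)%:R^-1 *
    \sum_(z : 'rV[gf2]_n | z != 0) `|\tr (adj W *m weyl 0 z *m W *m traceless O)|.
Proof.
move=> unit_W; apply: bigmax_le => [|b _]; last exact: norm_tr_Phi_le_sum_weylZ (tr_traceless O).
by rewrite mulr_ge0 ?invr_ge0 ?ler0n ?sumr_ge0.
Qed.

Lemma stab_norm_weyl n (A : 'M[algC]_(2 ^ n)) :
  stab_norm A = (2 ^ n)%:R^-1 * \sum_(x : 'rV[gf2]_n) \sum_(w : 'rV[gf2]_n) `|\tr (weyl x w *m A)|.
Proof.
rewrite /stab_norm -(sum_pauli_string (fun x w => `|\tr (weyl x w *m A)|)).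
by under eq_bigr do rewrite (norm_tr_phased _ (phased_pauli_string _)).
Qed.

Lemma sum_option (V : nmodType) (T : finType) (F : option T -> V) :
  \sum_(o : option T) F o = F None + \sum_(v : T) F (Some v).
Proof.
rewrite (bigD1 None) //= (reindex_omap Some id) /=; last by case.
by congr (_ + _); apply: eq_bigl => v; rewrite eqxx.
Qed.

Lemma ler_sum_inj (R : numDomainType) (I J : finType) (h : I -> J) (F : J -> R) :
  injective h -> (forall j, 0 <= F j) -> \sum_i F (h i) <= \sum_j F j.
Proof.
move=> h_inj F_ge0; rewrite -(eq_bigl _ _ (in_setT (T:=I))) -(big_imset F (in2W h_inj)) /=.
by rewrite [X in _ <= X](bigID (mem (h @: setT))) /= lerDl sumr_ge0.
Qed.

Lemma Btot_le_stab_norm n (P : {poly gf2}) (U : 'I_(2 ^ n) -> 'M[algC]_(2 ^ n))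
    (O : 'M[algC]_(2 ^ n)) :
  irreducible_poly P -> size P = n.+1 -> mub_family P U ->
  (forall v, adj (U v) *m U v = 1%:M) ->
  Btot U O <= stab_norm (traceless O).
Proof.
move=> irrP sizeP HU unit_U; set f := fun x w => `|\tr (weyl x w *m traceless O)|.
have B1 : Bnd 1%:M O <= (2 ^ n)%:R^-1 * \sum_(z | z != 0) f 0 z.
  have := Bnd_le_sum_weylZ O (unitary_ens unit_U None); rewrite /ens.
  by under eq_bigr do rewrite adj1mx mul1mx mulmx1.
have BU v : Bnd (U v) O <= (2 ^ n)%:R^-1 * \sum_(z | z != 0) f z (z *m alpha_mx P n v).
  have := Bnd_le_sum_weylZ O (unit_U v).
  by under eq_bigr do rewrite (norm_tr_phased _ (phased_conj_weylZ _ HU (unit_U v))).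
rewrite /Btot sum_option stab_norm_weyl -/f.
apply: le_trans (lerD B1 (ler_sum _ (fun v _ => BU v))) _.
rewrite -mulr_sumr -mulrDr ler_wpM2l ?invr_ge0 ?ler0n // exchange_big /=.
rewrite [X in _ <= X](bigD1 0) //=; apply: lerD.
  by rewrite [X in _ <= X](bigD1 0) //= lerDr.
apply: ler_sum => x x_neq0.
exact: ler_sum_inj (mulmx_alpha_mx_inj irrP sizeP x_neq0) (fun w => normr_ge0 _).
Qed.

Lemma mxE_delta m (M : 'M[algC]_m) (b : 'I_m) :
  ((delta_mx 0 b : 'rV_m) *m M *m (delta_mx b 0 : 'cV_m)) 0 0 = M b b.
Proof. by rewrite -rowE -colE !mxE. Qed.

Lemma mxtrace_mul_delta m (M : 'M[algC]_m) (b : 'I_m) : \tr (M *m delta_mx b b) = M b b.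
Proof.
rewrite -(mul_delta_mx (0 : 'I_1)) mulmxA mxtrace_mulC mulmxA.
by rewrite /mxtrace big_ord1 mxE_delta.
Qed.

Lemma hermitian_diag_real m (M : 'M[algC]_m) (b : 'I_m) : is_hermitian M -> M b b \is Num.real.
Proof. by move=> /(congr1 (fun A : 'M_m => A b b)); rewrite !mxE => /CrealP. Qed.

Lemma hermitian_traceless n (O : 'M[algC]_(2 ^ n)) :
  is_hermitian O -> is_hermitian (traceless O).
Proof.
move=> herO; have trO_real : \tr O \is Num.real.
  by apply: rpred_sum => i _; apply: hermitian_diag_real.
apply/matrixP => i j; have := congr1 (fun A : 'M_(2 ^ n) => A i j) herO.
rewrite /traceless !mxE => <-.
by rewrite rmorphB /= rmorphMn /= rmorphM /= (conj_Creal trO_real) fmorphV /= conjC_nat eq_sym.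
Qed.

Lemma tr_Phi_real n (H W : 'M[algC]_(2 ^ n)) (b : 'I_(2 ^ n)) :
  is_hermitian H -> \tr (H *m Phi W b) \is Num.real.
Proof.
move=> herH; rewrite /Phi !mulmxA mxtrace_mulC !mulmxA mxtrace_mul_delta.
by apply: hermitian_diag_real; rewrite /is_hermitian !adjM adjK herH mulmxA.
Qed.

Lemma outcome_prob_ge0 n (W rho : 'M[algC]_(2 ^ n)) (b : 'I_(2 ^ n)) :
  is_density rho -> 0 <= outcome_prob W rho b.
Proof.
case=> _ rho_psd _; have := rho_psd (adj W *m delta_mx b 0).
by rewrite adjM adjK adj_delta !mulmxA -(mulmxA _ W) -(mulmxA _ (W *m rho)) mxE_delta.
Qed.

Lemma sum_outcome_prob n (W rho : 'M[algC]_(2 ^ n)) :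
  adj W *m W = 1%:M -> is_density rho -> \sum_b outcome_prob W rho b = 1.
Proof.
move=> unit_W [_ _ tr_rho]; rewrite -[RHS]tr_rho.
by rewrite -[LHS]/(\tr (W *m rho *m adj W)) mxtrace_mulC mulmxA unit_W mul1mx.
Qed.

Section WeightedMean.
Variables (I J : finType) (S : pred I) (w : I -> J -> algC).

Definition wmean (h : I -> J -> algC) := \sum_(i | S i) \sum_j w i j * h i j.

Lemma eq_wmean h1 h2 : (forall i j, h1 i j = h2 i j) -> wmean h1 = wmean h2.
Proof. by move=> eq_h; apply: eq_bigr => i _; apply: eq_bigr => j _; rewrite eq_h. Qed.

Lemma wmeanB h1 h2 : wmean (fun i j => h1 i j - h2 i j) = wmean h1 - wmean h2.
Proof.
rewrite /wmean -sumrB; apply: eq_bigr => i _; rewrite -sumrB.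
by apply: eq_bigr => j _; rewrite mulrBr.
Qed.

Lemma wmeanZ k h : wmean (fun i j => k * h i j) = k * wmean h.
Proof.
rewrite /wmean mulr_sumr; apply: eq_bigr => i _; rewrite mulr_sumr.
by apply: eq_bigr => j _; rewrite mulrCA.
Qed.

Hypothesis w_sum1 : \sum_(i | S i) \sum_j w i j = 1.

Lemma wmean_cst k : wmean (fun _ _ => k) = k.
Proof.
rewrite -[RHS]mulr1 -w_sum1 mulr_sumr; apply: eq_bigr => i _; rewrite mulr_sumr.
by apply: eq_bigr => j _; rewrite mulrC.
Qed.

Lemma wmean_sq_dev_le h c :
  (forall i j, w i j \is Num.real) -> (forall i j, h i j \is Num.real) -> c \is Num.real ->
  wmean (fun i j => (h i j - wmean h) ^+ 2) <= wmean (fun i j => (h i j - c) ^+ 2).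
Proof.
move=> w_real h_real c_real; set m := wmean h.
have m_real : m \is Num.real.
  by apply: rpred_sum => i _; apply: rpred_sum => j _; apply: rpredM.
have gapE : wmean (fun i j => (h i j - c) ^+ 2) - wmean (fun i j => (h i j - m) ^+ 2) =
            (m - c) ^+ 2.
  rewrite -wmeanB (@eq_wmean _ (fun i j => (m - c) * (2%:R * h i j - (m + c)))) => [|i j].
    by rewrite wmeanZ wmeanB wmeanZ wmean_cst -/m; ring.
  by ring.
by rewrite -subr_ge0 gapE -realEsqr rpredB.
Qed.

End WeightedMean.

Lemma sqr_div_le (R : numFieldType) (t B p : R) :
  t \is Num.real -> `|t| <= B -> 0 <= p -> (t / p) ^+ 2 <= (B / p) ^+ 2.
Proof.
move=> t_real le_tB p_ge0; rewrite !expr_div_n ler_wpM2r ?invr_ge0 ?exprn_ge0 //.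
by rewrite -real_normK // ler_pXn2r // nnegrE ?normr_ge0 // (le_trans (normr_ge0 t) le_tB).
Qed.

Section VarianceBound.
Variables (n : nat) (U : 'I_(2 ^ n) -> 'M[algC]_(2 ^ n)) (O rho : 'M[algC]_(2 ^ n)).
Hypotheses (unit_U : forall v, adj (U v) *m U v = 1%:M)
  (herO : is_hermitian O) (rho_density : is_density rho).

Lemma Btot_ge0 : 0 <= Btot U O.
Proof. by apply: sumr_ge0 => o _; apply: Bnd_ge0. Qed.

Lemma pU_ge0 o : 0 <= pU U O o.
Proof. by rewrite divr_ge0 ?Bnd_ge0 ?Btot_ge0. Qed.

Lemma sum_sample_weights : Btot U O != 0 ->
  \sum_(o | pU U O o != 0) \sum_b pU U O o * outcome_prob (ens U o) rho b = 1.
Proof.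
move=> Btot_neq0.
under eq_bigr do rewrite -mulr_sumr (sum_outcome_prob (unitary_ens unit_U _) rho_density) mulr1.
have -> : 1 = \sum_o pU U O o by rewrite -mulr_suml divff.
rewrite [RHS](bigID (fun o => pU U O o != 0)) /=.
by rewrite [X in _ = _ + X]big1 ?addr0 // => o /negPn/eqP.
Qed.

Let c0 := (2 ^ n)%:R^-1 * \tr O.

Lemma c0_real : c0 \is Num.real.
Proof.
apply: rpredM; first by rewrite ger0_real // invr_ge0 ler0n.
by apply: rpred_sum => i _; apply: hermitian_diag_real.
Qed.

Lemma tr_traceless_Phi_real o b : \tr (traceless O *m Phi (ens U o) b) \is Num.real.
Proof. exact/tr_Phi_real/hermitian_traceless. Qed.

Lemma Ohat_real o b : Ohat U O o b \is Num.real.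
Proof.
apply: rpredD c0_real; apply: rpredM (tr_traceless_Phi_real o b) _.
by rewrite realV ger0_real ?pU_ge0.
Qed.

Lemma sqr_Ohat_sub_le o b : (Ohat U O o b - c0) ^+ 2 <= (Bnd (ens U o) O / pU U O o) ^+ 2.
Proof.
rewrite /Ohat addrK sqr_div_le ?pU_ge0 ?tr_traceless_Phi_real //.
by rewrite mxtrace_mulC norm_tr_Phi_le_Bnd.
Qed.

Lemma variance_le_Btot_sq : variance U O rho <= Btot U O ^+ 2.
Proof.
have [Btot0|Btot_neq0] := eqVneq (Btot U O) 0.
  by rewrite /variance /expect big1 ?Btot0 ?expr0n // => o; rewrite /pU Btot0 invr0 mulr0 eqxx.
apply: le_trans (@wmean_sq_dev_le _ _ (fun o => pU U O o != 0)
    (fun o b => pU U O o * outcome_prob (ens U o) rho b) (sum_sample_weights Btot_neq0)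
    (Ohat U O) c0 _ Ohat_real c0_real) _.
  by move=> o b; rewrite ger0_real // mulr_ge0 ?pU_ge0 ?outcome_prob_ge0.
apply: (@le_trans _ _ (\sum_(o | pU U O o != 0) Bnd (ens U o) O * Btot U O)).
  apply: ler_sum => o pU_neq0.
  have Bnd_neq0 : Bnd (ens U o) O != 0 by apply: contraNneq pU_neq0 => B0; rewrite /pU B0 mul0r.
  have term_le b : pU U O o * outcome_prob (ens U o) rho b * (Ohat U O o b - c0) ^+ 2 <=
                   pU U O o * outcome_prob (ens U o) rho b * (Bnd (ens U o) O / pU U O o) ^+ 2.
    by apply: ler_wpM2l (sqr_Ohat_sub_le o b); rewrite mulr_ge0 ?pU_ge0 // outcome_prob_ge0.
  apply: le_trans (ler_sum _ (fun b _ => term_le b)) _.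
  rewrite -mulr_suml -mulr_sumr (sum_outcome_prob (unitary_ens unit_U o) rho_density) mulr1.
  have -> : pU U O o * (Bnd (ens U o) O / pU U O o) ^+ 2 = Bnd (ens U o) O * Btot U O.
    by rewrite /pU; field; rewrite Bnd_neq0 Btot_neq0.
  by [].
rewrite -mulr_suml expr2 ler_wpM2r ?Btot_ge0 // /Btot.
rewrite [X in _ <= X](bigID (fun o => pU U O o != 0)) /=.
by rewrite lerDl sumr_ge0 // => o _; apply: Bnd_ge0.
Qed.

End VarianceBound.

Lemma stab_norm_ge0 n (A : 'M[algC]_(2 ^ n)) : 0 <= stab_norm A.
Proof. by rewrite mulr_ge0 ?invr_ge0 ?ler0n ?sumr_ge0. Qed.

Theorem theorem3 (n : nat) (P : {poly gf2})
  (Pirr : irreducible_poly P) (Pdeg : size P = n.+1)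
  (U : 'I_(2 ^ n) -> 'M[algC]_(2 ^ n)) (HU : mub_family P U)
  (O : 'M[algC]_(2 ^ n)) (HO : is_hermitian O)
  (HOnot : ~ exists c : algC, O = c%:M)
  (rho : 'M[algC]_(2 ^ n)) (Hrho : is_density rho) :
  variance U O rho <= Btot U O ^+ 2 /\
  Btot U O ^+ 2 <= stab_norm (traceless O) ^+ 2.
Proof.
have n_gt0 : (0 < n)%N by case: Pirr; rewrite Pdeg.
have unit_U v : adj (U v) *m U v = 1%:M by have [[]] := HU v (Ordinal n_gt0).
split; first exact: variance_le_Btot_sq.
rewrite ler_pXn2r ?nnegrE ?Btot_ge0 ?stab_norm_ge0 //.
exact: Btot_le_stab_norm Pirr Pdeg HU unit_U.
Qed.
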